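(* Let $K$ be a field and let $A$ be a $K$-algebra finitely presented by $alg\langle X \mid P\rangle$, where $X$ is a set and $P \subseteq K[X^\dagger]$, with quotient morphism $\theta: K[X^\dagger] \to A$ (so $\theta$ induces an isomorphism $K[X^\dagger]/\langle P\rangle \cong A$, where $\langle P\rangle$ is the two-sided ideal generated by $P$). Let $Q \subseteq K[X^\dagger]$ and put $Q' := \theta(Q) \subseteq A$. Let $\langle Q'\rangle^r = \{q_1'a_1+\cdots+q_n'a_n : q_i'\in Q', a_i \in A\}$ be the right ideal of $A$ generated by $Q'$, and let $A/\langle Q'\rangle^r$ denote the set of classes of $A$ under the relation $a \sim b \iff a-b \in \langle Q'\rangle^r$. Define the mixed set $F := (F_T, F_P)$ with tagged part $F_T := \dashv\! Q = \{\dashv\! q : q \in Q\}$ and untagged part $F_P := P$. Then there is a bijection of sets $$\frac{K[\dashv\! X^\dagger]}{\stackrel{*}{\leftrightarrow}_F} \;\cong\; \frac{A}{\langle Q'\rangle^r}.$$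
   Context: $X^\dagger$ is the free semigroup of nonempty words on $X$, $X^*$ the free monoid (empty word $id$), and $K[X^\dagger]$ the free (noncommutative) $K$-algebra of polynomials $k_1m_1+\cdots+k_nm_n$ ($k_i\in K$, $m_i\in X^\dagger$). A semigroup well-ordering $>$ on $X^\dagger$ is fixed: a well-ordering such that $m_1>m_2$ implies $um_1v>um_2v$ for all $u,v\in X^*$. For a nonzero polynomial, its leading term $\mathtt{LT}$ is its largest term w.r.t. $>$ and its leading coefficient $\mathtt{LC}$ is the coefficient of that term. Tagged polynomials: $\dashv$ is a symbol; $\dashv\! X^\dagger=\{\dashv\! m : m\in X^\dagger\}$ is the set of tagged terms, and $K[\dashv\! X^\dagger]$ is the $K$-vector space with basis $\dashv\! X^\dagger$, a right $K[X^\dagger]$-module via $(\dashv\! m)w=\dashv\!(mw)$. For $p=\sum k_im_i\in K[X^\dagger]$ and $w\in X^*$, write $\dashv\! w\,p := \sum k_i \dashv\!(w m_i)$ (with $\dashv\! p := \dashv\! id\, p$). Tagged terms are ordered by $\dashv\! m_1>\dashv\! m_2 \iff m_1>m_2$, giving leading terms and coefficients of nonzero tagged polynomials. Reduction: for a mixed set $F=(F_T,F_P)$ with $F_T\subseteq K[\dashv\! X^\dagger]$, $F_P\subseteq K[X^\dagger]$ (zero elements ignored), the relation $\to_F$ on $K[\dashv\! X^\dagger]$ is: $f\to_F f-\frac{k}{\mathtt{LC}(f_i)} f_i v$ if $f_i\in F_T$, $v\in X^*$ and the tagged term $\mathtt{LT}(f_i)v$ occurs in $f$ with coefficient $k\neq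 0$; and $f\to_F f-\frac{k}{\mathtt{LC}(f_i)}\dashv\! w\, f_i\, v$ if $f_i\in F_P$, $w,v\in X^*$ and the tagged term $\dashv\!(w\,\mathtt{LT}(f_i)\,v)$ occurs in $f$ with coefficient $k\ne0$. (The paper normalizes all polynomials to be monic, i.e. $\mathtt{LC}=1$.) $\stackrel{*}{\leftrightarrow}_F$ denotes the reflexive, symmetric, transitive closure of $\to_F$. *)

From HB Require Import structures.
From mathcomp Require Import all_boot all_order all_algebra.
From mathcomp Require Import finmap.
From mathcomp.multinomials Require Import monalg.
From Stdlib Require Import Relation_Operators.

Set Implicit Arguments.
Unset Strict Implicit.
Unset Printing Implicit Defensive.

Import GRing.Theory.
Local Open Scope ring_scope.

(* Nonempty words X^dagger, encoded as (first letter, remaining letters). *)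
Definition word (X : finType) : Type := (X * seq X)%type.
HB.instance Definition _ (X : finType) := Choice.on (word X).

Definition wseq (X : finType) (m : word X) : seq X := m.1 :: m.2.

Definition wcat (X : finType) (w : seq X) (m : word X) (v : seq X) : word X :=
  match w with
  | [::] => (m.1, m.2 ++ v)
  | y :: w' => (y, w' ++ m.1 :: m.2 ++ v)
  end.

Notation fpoly K X := {malg K[word X]}.
(* K[-| X^dagger]: the K-vector space with basis the tagged terms -|m,
   the tagged term -|m being represented by the basis element <<m>>. *)
Notation tpoly K X := {malg K[word X]}.

Definition dtag (K : fieldType) (X : finType) (p : fpoly K X) : tpoly K X := p.

(* w p v := sum_i k_i (w m_i v); on tagged polynomials it is -| w p v *)
Definition shift (K : fieldType) (X : finType) (w : seq X) (p : fpoly K X)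
    (v : seq X) : fpoly K X :=
  \sum_(m <- msupp p) p@_m *: << wcat w m v >>.

Definition pmul (K : fieldType) (X : finType) (p q : fpoly K X) : fpoly K X :=
  \sum_(m <- msupp p) \sum_(n <- msupp q)
     (p@_m * q@_n) *: << wcat (wseq m) n [::] >>.

Definition semigroup_wellorder (X : finType) (lt : rel (word X)) : Prop :=
  [/\ irreflexive lt, transitive lt,
      (forall a b, a != b -> lt a b || lt b a),
      well_founded (fun a b => lt a b) &
      (forall (w v : seq X) (a b : word X),
          lt a b -> lt (wcat w a v) (wcat w b v))].

Definition is_LT (K : fieldType) (X : finType) (lt : rel (word X))
    (f : fpoly K X) (m : word X) : Prop :=
  m \in msupp f /\ (forall m', m' \in msupp f -> m' != m -> lt m' m).

Definition red (K : fieldType) (X : finType) (lt : rel (word X))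
    (FT : tpoly K X -> Prop) (FP : fpoly K X -> Prop) (f g : tpoly K X) : Prop :=
  (exists (fi : tpoly K X) (m : word X) (v : seq X),
      [/\ FT fi, is_LT lt fi m, f@_(wcat [::] m v) != 0 &
          g = f - (f@_(wcat [::] m v) / fi@_m) *: shift [::] fi v])
  \/
  (exists (p : fpoly K X) (m : word X) (w v : seq X),
      [/\ FP p, is_LT lt p m, f@_(wcat w m v) != 0 &
          g = f - (f@_(wcat w m v) / p@_m) *: shift w p v]).

Definition conv (K : fieldType) (X : finType) (lt : rel (word X))
    (FT : tpoly K X -> Prop) (FP : fpoly K X -> Prop) : tpoly K X -> tpoly K X -> Prop :=
  clos_refl_sym_trans _ (red lt FT FP).

Inductive ideal2 (K : fieldType) (X : finType) (S : fpoly K X -> Prop)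
    : fpoly K X -> Prop :=
  | ideal2_gen p : S p -> ideal2 S p
  | ideal2_0 : ideal2 S 0
  | ideal2_add p q : ideal2 S p -> ideal2 S q -> ideal2 S (p + q)
  | ideal2_scale k p : ideal2 S p -> ideal2 S (k *: p)
  | ideal2_lmul r p : ideal2 S p -> ideal2 S (pmul r p)
  | ideal2_rmul r p : ideal2 S p -> ideal2 S (pmul p r).

Definition nu_algebra (K : fieldType) (A : lmodType K) (mulA : A -> A -> A) : Prop :=
  [/\ associative mulA,
      (forall a, linear (mulA a)) &
      (forall a, linear (fun b => mulA b a))].

Inductive rideal (K : fieldType) (A : lmodType K) (mulA : A -> A -> A)
    (S : A -> Prop) : A -> Prop :=
  | rideal_gen a : S a -> rideal mulA S a
  | rideal_0 : rideal mulA S 0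
  | rideal_add a b : rideal mulA S a -> rideal mulA S b -> rideal mulA S (a + b)
  | rideal_scale k a : rideal mulA S a -> rideal mulA S (k *: a)
  | rideal_rmul a b : rideal mulA S a -> rideal mulA S (mulA a b).

Definition classes (T : Type) (R : T -> T -> Prop) : Type :=
  {C : T -> Prop | exists x, C = R x}.

(* A tagged reduction by q subtracts a multiple of -|q v and an untagged one
   by p a multiple of -|w p v, so f <->*_F g forces f - g into <Q>^r + <P>,
   the right ideal of K[X^dagger] generated by Q plus the two-sided ideal
   generated by P.  Conversely, if s is such a generator with leading term m,
   then for any g the polynomials g and g + k s either reduce one to the other
   or both reduce to the same polynomial by eliminating their coefficient at
   m; hence adding an element of <Q>^r + <P> stays within a <->*_F class.
   Since theta maps <Q>^r onto <Q'>^r and has kernel <P>, f - g lies in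
   <Q>^r + <P> exactly when theta f ~ theta g, and theta induces the
   bijection. *)

From HB Require Import structures.
From mathcomp Require Import all_boot all_order all_algebra.
From mathcomp Require Import finmap.
From mathcomp.multinomials Require Import monalg.
From Stdlib Require Import Relation_Operators.
From Stdlib Require Import FunctionalExtensionality PropExtensionality ProofIrrelevance.

Set Implicit Arguments.
Unset Strict Implicit.
Unset Printing Implicit Defensive.

Import GRing.Theory.
Local Open Scope ring_scope.

Section Words.
Variable X : finType.

Lemma wseq_inj : injective (@wseq X).
Proof. by case=> a s [b t] /= [-> ->]. Qed.

Lemma wseq_wcat (w : seq X) m v : wseq (wcat w m v) = w ++ wseq m ++ v.
Proof. by case: w => [|y w] //=; rewrite -catA. Qed.

Lemma wcat_inj (w v : seq X) : injective (fun m => wcat w m v).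
Proof.
move=> a b /(congr1 (@wseq X)); rewrite !wseq_wcat => /eqP.
rewrite eqseq_cat // => /andP[_ /eqP e].
have size_ab : size (wseq a) = size (wseq b).
  by move/(congr1 size): e; rewrite !size_cat => /addIn.
by move/eqP: e; rewrite eqseq_cat // => /andP[/eqP/wseq_inj].
Qed.
End Words.

Section LinearExtension.
Variables (K : fieldType) (X : finType).
Implicit Types (f g : word X -> word X) (p q r : fpoly K X).

Definition linext f p : fpoly K X := \sum_(m <- msupp p) p@_m *: << f m >>.

Lemma linextEw f p (d : {fset word X}) : (msupp p `<=` d)%fset ->
  linext f p = \sum_(m <- d) p@_m *: << f m >>.
Proof.
move=> le_pd; rewrite /linext (big_fset_incl _ le_pd) // => m _ /mcoeff_outdom ->.
by rewrite scale0r.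
Qed.

Lemma linext_is_linear f : linear (linext f).
Proof.
move=> c p q.
have le_p : (msupp p `<=` msupp p `|` msupp q)%fset by apply: fsubsetUl.
have le_q : (msupp q `<=` msupp p `|` msupp q)%fset by apply: fsubsetUr.
have le_cpq : (msupp (c *: p + q) `<=` msupp p `|` msupp q)%fset.
  by apply: fsubset_trans (msuppD_le _ _) _; apply: fsetSU; apply: msuppZ_le.
rewrite (linextEw _ le_cpq) (linextEw _ le_p) (linextEw _ le_q).
rewrite scaler_sumr -big_split /=; apply: eq_bigr => m _.
by rewrite mcoeffD mcoeffZ scalerDl scalerA.
Qed.

HB.instance Definition _ f :=
  GRing.isLinear.Build K (fpoly K X) (fpoly K X) _ (linext f) (linext_is_linear f).

Lemma linextU f m : linext f << m >> = << f m >>.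
Proof. by rewrite /linext msuppU oner_eq0 big_seq_fset1 mcoeffUU scale1r. Qed.

Lemma eq_linext f g p : f =1 g -> linext f p = linext g p.
Proof. by move=> efg; apply: eq_bigr => m _; rewrite efg. Qed.

Lemma linext_comp f g p : linext f (linext g p) = linext (f \o g) p.
Proof.
rewrite [linext g p]/linext linear_sum; apply: eq_bigr => m _ /=.
by rewrite linearZ /= linextU.
Qed.

Lemma mcoeff_linext f p k :
  (linext f p)@_k = \sum_(m <- msupp p) p@_m * (f m == k)%:R.
Proof.
rewrite /linext raddf_sum; apply: eq_bigr => m _ /=.
by rewrite mcoeffZ mcoeffU.
Qed.

Lemma linext_id p : linext id p = p.
Proof.
apply/malgP => k; rewrite mcoeff_linext.
have [kp|kNp] := boolP (k \in msupp p).
  rewrite (big_fsetD1 k) //= eqxx mulr1 big1_fset ?addr0 // => m.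
  by rewrite in_fsetD1 => /andP[/negbTE -> _] _; rewrite mulr0.
rewrite (mcoeff_outdom kNp) big1_fset // => m mp _.
by case: eqP => [emk|_]; [move: kNp; rewrite -emk mp | rewrite mulr0].
Qed.

Lemma mcoeff_linext_inj f p m : injective f -> (linext f p)@_(f m) = p@_m.
Proof.
move=> f_inj; rewrite -[RHS](congr1 (mcoeff m) (linext_id p)) !mcoeff_linext.
by apply: eq_bigr => m' _; rewrite (inj_eq f_inj).
Qed.
End LinearExtension.

Section ShiftProduct.
Variables (K : fieldType) (X : finType).
Implicit Types (w v : seq X) (p q r : fpoly K X).

Lemma shiftE w p v : shift w p v = linext (fun m => wcat w m v) p.
Proof. by []. Qed.

Lemma shift_nil p : shift [::] p [::] = p.
Proof.
by rewrite shiftE -[RHS]linext_id; apply: eq_linext => -[a s] /=; rewrite cats0.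
Qed.

Lemma mcoeff_shift w p v m : (shift w p v)@_(wcat w m v) = p@_m.
Proof. by rewrite shiftE mcoeff_linext_inj //; apply: wcat_inj. Qed.

Lemma pmulEl p q :
  pmul p q = \sum_(m <- msupp p) p@_m *: shift (wseq m) q [::].
Proof.
apply: eq_bigr => m _; rewrite /shift scaler_sumr.
by apply: eq_bigr => n _; rewrite scalerA.
Qed.

Lemma pmulEr p q :
  pmul p q = \sum_(n <- msupp q) q@_n *: shift [::] p (wseq n).
Proof.
rewrite /pmul exchange_big /=; apply: eq_bigr => n _; rewrite /shift scaler_sumr.
apply: eq_bigr => m _; rewrite scalerA mulrC; congr (_ *: << _ >>).
by case: m => a s; case: n => b t /=; rewrite cats0.
Qed.

Lemma shift_pmull w r p v : shift w (pmul r p) v =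
  \sum_(m <- msupp r) r@_m *: shift (w ++ wseq m) p v.
Proof.
rewrite pmulEl shiftE linear_sum; apply: eq_bigr => m _ /=.
rewrite linearZ /= linext_comp; congr (_ *: _); apply: eq_linext => n /=.
by apply: (@wseq_inj X); rewrite !wseq_wcat /= cats0 -!catA.
Qed.

Lemma shift_pmulr w p r v : shift w (pmul p r) v =
  \sum_(n <- msupp r) r@_n *: shift w p (wseq n ++ v).
Proof.
rewrite pmulEr shiftE linear_sum; apply: eq_bigr => n _ /=.
rewrite linearZ /= linext_comp; congr (_ *: _); apply: eq_linext => m /=.
by apply: (@wseq_inj X); rewrite !wseq_wcat /= -catA.
Qed.

Lemma pmulU p n : pmul p << n >> = shift [::] p (wseq n).
Proof.
rewrite -[LHS]shift_nil shift_pmulr msuppU oner_eq0 big_seq_fset1.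
by rewrite mcoeffUU scale1r cats0.
Qed.

Lemma shift_Upmul n p v : shift [::] (pmul << n >> p) v = shift (wseq n) p v.
Proof. by rewrite shift_pmull msuppU oner_eq0 big_seq_fset1 mcoeffUU scale1r. Qed.

Lemma ideal2_shift (S : fpoly K X -> Prop) h w v :
  ideal2 S h -> ideal2 S (shift w h v).
Proof.
have shiftr h' v' : ideal2 S h' -> ideal2 S (shift [::] h' v').
  case: v' => [|y v'] Sh'; first by rewrite shift_nil.
  by rewrite -[y :: v']/(wseq (y, v')) -pmulU; apply: ideal2_rmul.
case: w => [|y w] Sh; first exact: shiftr.
by rewrite -[y :: w]/(wseq (y, w)) -shift_Upmul; apply/shiftr/ideal2_lmul.
Qed.

Lemma rideal_shift (S : fpoly K X -> Prop) h v :
  rideal (@pmul K X) S h -> rideal (@pmul K X) S (shift [::] h v).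
Proof.
case: v => [|y v] Sh; first by rewrite shift_nil.
by rewrite -[y :: v]/(wseq (y, v)) -pmulU; apply: rideal_rmul.
Qed.
End ShiftProduct.

Lemma seq_max_exists (T : eqType) (lt : rel T) : transitive lt ->
    (forall a b, a != b -> lt a b || lt b a) ->
  forall s : seq T, s != [::] ->
  exists2 m, m \in s & forall m', m' \in s -> m' != m -> lt m' m.
Proof.
move=> lt_trans lt_total; elim=> [|a s IH] // _.
have [->|/IH [m ms m_max]] := eqVneq s [::].
  by exists a => [|m']; rewrite ?inE // => /eqP ->; rewrite eqxx.
have [am|] := boolP ((a == m) || lt a m).
  exists m => [|m']; first by rewrite inE ms orbT.
  rewrite inE => /predU1P[-> ne_am|]; last exact: m_max.
  by move: am; rewrite (negbTE ne_am).
rewrite negb_or => /andP[ne_am Nlt_am].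
have lt_ma : lt m a by move: (lt_total _ _ ne_am); rewrite (negbTE Nlt_am).
exists a => [|m']; first exact: mem_head.
rewrite inE => /predU1P[-> /eqP //|m's _].
have [-> //|ne_m'm] := eqVneq m' m.
exact: lt_trans (m_max _ m's ne_m'm) lt_ma.
Qed.

Lemma is_LT_exists (K : fieldType) (X : finType) (lt : rel (word X)) :
    transitive lt -> (forall a b, a != b -> lt a b || lt b a) ->
  forall p : fpoly K X, p != 0 -> exists m, is_LT lt p m.
Proof.
move=> lt_trans lt_total p p_neq0.
have [supp0|[k kp]] := fset_0Vmem (msupp p).
  by case/eqP: p_neq0; apply/malgP => k; rewrite mcoeff0 mcoeff_outdom // supp0.
have supp_p : msupp p != [::] :> seq _.
  by apply/eqP => supp_nil; move: kp; rewrite -[k \in _]/(k \in enum_fset _) supp_nil.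
have [m mp m_max] := seq_max_exists lt_trans lt_total supp_p.
by exists m.
Qed.

#[local] Arguments rst_step {A R x y}.
#[local] Arguments rst_sym {A R x y}.
#[local] Arguments rst_trans {A R x y z}.

Section Conversion.
Variables (K : fieldType) (X : finType) (lt : rel (word X)).
Variables (Q P : fpoly K X -> Prop).
Hypothesis lt_trans : transitive lt.
Hypothesis lt_total : forall a b, a != b -> lt a b || lt b a.

Definition tagged (f : tpoly K X) := exists q, Q q /\ f = dtag q.

Local Notation convF := (conv lt tagged P).

Definition ideal_sum (h : fpoly K X) :=
  exists h1 h2, [/\ rideal (@pmul K X) Q h1, ideal2 P h2 & h = h1 + h2].

Lemma ideal_sum_conv f g : convF f g -> ideal_sum (f - g).
Proof.
elim=> {f g} [f g red_fg|f|f g _ [h1 [h2 [Qh1 Ph2 e12]]]|f g h _ IH1 _ IH2].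
- case: red_fg => [[_ [m [v [[q [Qq ->]] _ _ ->]]]]|[p [m [w [v [Pp _ _ ->]]]]]].
    rewrite opprB addrC subrK; set c := _ / _.
    exists (c *: shift [::] q v), 0; rewrite addr0.
    by split=> //; [apply/rideal_scale/rideal_shift/rideal_gen | apply: ideal2_0].
  rewrite opprB addrC subrK; set c := _ / _.
  exists 0, (c *: shift w p v); rewrite add0r.
  by split=> //; [apply: rideal_0 | apply/ideal2_scale/ideal2_shift/ideal2_gen].
- by exists 0, 0; rewrite subrr addr0; split=> //; [apply: rideal_0 | apply: ideal2_0].
- rewrite -opprB -scaleN1r e12 scalerDr; exists ((-1) *: h1), ((-1) *: h2).
  by split=> //; [apply: rideal_scale | apply: ideal2_scale].
- case: IH1 IH2 => [h1 [h2 [Qh1 Ph2 e12]]] [h1' [h2' [Qh1' Ph2' e12']]].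
  rewrite -(subrKA g) e12 e12' addrACA; exists (h1 + h1'), (h2 + h2').
  by split=> //; [apply: rideal_add | apply: ideal2_add].
Qed.

Definition conv_null (h : fpoly K X) := forall g, convF (g + h) g.

Lemma conv_null0 : conv_null 0.
Proof. by move=> g; rewrite addr0; apply: rst_refl. Qed.

Lemma conv_nullD h1 h2 : conv_null h1 -> conv_null h2 -> conv_null (h1 + h2).
Proof. by move=> null1 null2 g; rewrite addrA; apply: rst_trans (null2 _) (null1 _). Qed.

Lemma conv_nullZ_sum (I : Type) (s : seq I) (F : I -> fpoly K X) :
  (forall i k, conv_null (k *: F i)) -> forall k, conv_null (k *: \sum_(i <- s) F i).
Proof.
move=> nullF k; elim: s => [|i s IH]; first by rewrite big_nil scaler0; apply: conv_null0.
by rewrite big_cons scalerDr; apply: conv_nullD.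
Qed.

Lemma conv_nullZ_reducer (s : fpoly K X) (m : word X) :
    s@_m != 0 ->
    (forall f, f@_m != 0 -> red lt tagged P f (f - (f@_m / s@_m) *: s)) ->
  forall k, conv_null (k *: s).
Proof.
move=> s_m red_s k g.
have [->|k_neq0] := eqVneq k 0; first by rewrite scale0r addr0; apply: rst_refl.
set f := g + k *: s.
have f_m : f@_m = g@_m + k * s@_m by rewrite /f mcoeffD mcoeffZ.
have [g_m0|g_m] := eqVneq (g@_m) 0.
  have f_m0 : f@_m != 0 by rewrite f_m g_m0 add0r mulf_neq0.
  by apply: rst_step; have := red_s f f_m0; rewrite f_m g_m0 add0r mulfK // addrK.
have [f_m0|f_m0] := eqVneq (f@_m) 0.
  apply/rst_sym/rst_step; have := red_s g g_m.
  have -> : g@_m = - (k * s@_m) by apply/eqP; rewrite -addr_eq0 -f_m f_m0.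
  by rewrite mulNr mulfK // scaleNr opprK.
apply: rst_trans (rst_step (red_s f f_m0)) _; apply/rst_sym/rst_step.
have := red_s g g_m; congr red.
by rewrite f_m mulrDl mulfK // scalerDl /f opprD addrACA subrr addr0.
Qed.

Lemma conv_null_tagged q v k : Q q -> conv_null (k *: shift [::] q v).
Proof.
move=> Qq; have [->|q_neq0] := eqVneq q 0.
  by rewrite shiftE raddf0 scaler0; apply: conv_null0.
have [m LT_qm] := is_LT_exists lt_trans lt_total q_neq0.
apply: (@conv_nullZ_reducer _ (wcat [::] m v)); rewrite mcoeff_shift.
  by rewrite mcoeff_eq0 negbK; case: LT_qm.
by move=> f f_m; left; exists q, m, v; split=> //; exists q.
Qed.

Lemma conv_null_untagged p w v k : P p -> conv_null (k *: shift w p v).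
Proof.
move=> Pp; have [->|p_neq0] := eqVneq p 0.
  by rewrite shiftE raddf0 scaler0; apply: conv_null0.
have [m LT_pm] := is_LT_exists lt_trans lt_total p_neq0.
apply: (@conv_nullZ_reducer _ (wcat w m v)); rewrite mcoeff_shift.
  by rewrite mcoeff_eq0 negbK; case: LT_pm.
by move=> f f_m; right; exists p, m, w, v.
Qed.

Lemma conv_null_ideal2_shift h : ideal2 P h ->
  forall w v k, conv_null (k *: shift w h v).
Proof.
elim=> {h} [p Pp||p q _ IH1 _ IH2|c p _ IH|r p _ IH|p r _ IH] w v k.
- exact: conv_null_untagged.
- by rewrite shiftE raddf0 scaler0; apply: conv_null0.
- rewrite shiftE raddfD scalerDr.
  by apply: conv_nullD; [apply: IH1 | apply: IH2].
- by rewrite shiftE linearZ scalerA; apply: IH.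
- by rewrite shift_pmull; apply: conv_nullZ_sum => m k'; rewrite scalerA; apply: IH.
- by rewrite shift_pmulr; apply: conv_nullZ_sum => n k'; rewrite scalerA; apply: IH.
Qed.

Lemma conv_null_rideal_shift h : rideal (@pmul K X) Q h ->
  forall v k, conv_null (k *: shift [::] h v).
Proof.
elim=> {h} [q Qq||p q _ IH1 _ IH2|c p _ IH|p r _ IH] v k.
- exact: conv_null_tagged.
- by rewrite shiftE raddf0 scaler0; apply: conv_null0.
- rewrite shiftE raddfD scalerDr.
  by apply: conv_nullD; [apply: IH1 | apply: IH2].
- by rewrite shiftE linearZ scalerA; apply: IH.
- by rewrite shift_pmulr; apply: conv_nullZ_sum => n k'; rewrite scalerA; apply: IH.
Qed.

Lemma conv_ideal_sum f g : ideal_sum (f - g) -> convF f g.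
Proof.
case=> [h1 [h2 [Qh1 Ph2 e12]]].
have null_h1 : conv_null h1.
  by rewrite -[h1]scale1r -[h1]shift_nil; apply: conv_null_rideal_shift.
have null_h2 : conv_null h2.
  by rewrite -[h2]scale1r -[h2]shift_nil; apply: conv_null_ideal2_shift.
by have := conv_nullD null_h1 null_h2 g; rewrite -e12 addrC subrK.
Qed.

Lemma conv_iff_ideal_sum f g : convF f g <-> ideal_sum (f - g).
Proof. by split; [apply: ideal_sum_conv | apply: conv_ideal_sum]. Qed.
End Conversion.

Section Classes.
Variables (T : Type) (R : T -> T -> Prop).

Lemma class_ext (C D : classes R) : (forall x, sval C x <-> sval D x) -> C = D.
Proof.
move=> CD; apply: eq_sig_hprop => [? ? ?|]; first exact: proof_irrelevance.
by apply: functional_extensionality => x; apply/propositional_extensionality/CD.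
Qed.

Lemma is_class (C : T -> Prop) x : (forall y, C y <-> R x y) -> exists x, C = R x.
Proof.
move=> Cx; exists x; apply: functional_extensionality => y.
exact/propositional_extensionality/Cx.
Qed.
End Classes.

Lemma classes_bijective (T U : Type) (RT : T -> T -> Prop) (RU : U -> U -> Prop)
    (f : T -> U) :
    (forall u, RU u u) -> (forall u v w, RU u v -> RU v w -> RU u w) ->
    (forall x y, RT x y <-> RU (f x) (f y)) -> (forall u, exists x, f x = u) ->
  exists phi : classes RT -> classes RU, bijective phi.
Proof.
move=> RU_refl RU_trans RTf f_surj.
have phiP (C : classes RT) :
    exists u, (fun u => exists x, sval C x /\ RU (f x) u) = RU u.
  case: C => C [x0 eC]; subst C; apply: (is_class (x := f x0)) => u; split.
    by case=> x [/RTf x0x xu]; apply: RU_trans x0x xu.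
  by move=> x0u; exists x0; split=> //; apply/RTf/RU_refl.
have psiP (D : classes RU) : exists x, (fun x => sval D (f x)) = RT x.
  case: D => D [u0 eD]; subst D; have [x0 <-] := f_surj u0.
  by apply: (is_class (x := x0)) => x; apply: iff_sym.
exists (fun C => exist (fun C' => exists u, C' = RU u) _ (phiP C)).
exists (fun D => exist (fun D' => exists x, D' = RT x) _ (psiP D)).
  case=> C [x0 eC]; subst C; apply: class_ext => x /=; split.
    by case=> y [/RTf x0y yx]; apply/RTf; apply: RU_trans x0y yx.
  by move=> x0x; exists x; split=> //; apply: RU_refl.
case=> D [u0 eD]; subst D; apply: class_ext => u /=; split.
  by case=> x [u0x xu]; apply: RU_trans u0x xu.
by move=> u0u; have [x fx] := f_surj u; exists x; rewrite fx; split=> //; apply: RU_refl.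
Qed.

Section Presentation.
Variables (K : fieldType) (X : finType) (A : lmodType K).
Variables (mulA : A -> A -> A) (theta : fpoly K X -> A) (Q P : fpoly K X -> Prop).
Hypothesis theta_linear : linear theta.
Hypothesis theta_mul : forall p q, theta (pmul p q) = mulA (theta p) (theta q).
Hypothesis theta_surj : forall a, exists p, theta p = a.
Hypothesis theta_ker : forall p, theta p = 0 <-> ideal2 P p.

Local Notation Q' := (fun a => exists q, Q q /\ theta q = a).

HB.instance Definition _ := GRing.isLinear.Build K _ _ _ theta theta_linear.

Lemma rideal_theta h : rideal (@pmul K X) Q h -> rideal mulA Q' (theta h).
Proof.
elim=> {h} [q Qq||p q _ IHp _ IHq|c p _ IH|p r _ IH].
- by apply: rideal_gen; exists q.
- by rewrite raddf0; apply: rideal_0.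
- by rewrite raddfD; apply: rideal_add.
- by rewrite linearZ; apply: rideal_scale.
- by rewrite theta_mul; apply: rideal_rmul.
Qed.

Lemma rideal_theta_lift a :
  rideal mulA Q' a -> exists2 h, rideal (@pmul K X) Q h & theta h = a.
Proof.
elim=> {a} [_ [q [Qq <-]]||a b _ [h Qh <-] _ [h' Qh' <-]|c a _ [h Qh <-]|a b _ [h Qh <-]].
- by exists q => //; apply: rideal_gen.
- by exists 0; [apply: rideal_0 | rewrite raddf0].
- by exists (h + h'); [apply: rideal_add | rewrite raddfD].
- by exists (c *: h); [apply: rideal_scale | rewrite linearZ].
- have [r <-] := theta_surj b.
  by exists (pmul h r); [apply: rideal_rmul | rewrite theta_mul].
Qed.

Lemma rideal_theta_iff f g :
  rideal mulA Q' (theta f - theta g) <-> ideal_sum Q P (f - g).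
Proof.
rewrite -raddfB /=; split=> [/rideal_theta_lift [h1 Qh1 theta_h1] | [h1 [h2 [Qh1 Ph2 ->]]]].
  exists h1, (f - g - h1); split=> //; last by rewrite [RHS]addrC subrK.
  by apply/theta_ker; rewrite raddfB /= theta_h1 subrr.
by rewrite raddfD /= (proj2 (theta_ker h2) Ph2) addr0; apply: rideal_theta.
Qed.
End Presentation.

Theorem theorem3p4 (K : fieldType) (X : finType) (lt : rel (word X))
    (P : seq (fpoly K X)) (Q : fpoly K X -> Prop)
    (A : lmodType K) (mulA : A -> A -> A) (theta : fpoly K X -> A) :
  semigroup_wellorder lt ->
  nu_algebra mulA ->
  linear theta ->
  (forall p q, theta (pmul p q) = mulA (theta p) (theta q)) ->
  (forall a : A, exists p, theta p = a) ->
  (forall p, theta p = 0 <-> ideal2 (fun r => r \in P) p) ->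
  let Q' := fun a : A => exists q, Q q /\ theta q = a in
  let FT := fun f : tpoly K X => exists q, Q q /\ f = dtag q in
  let FP := fun p : fpoly K X => p \in P in
  exists phi : classes (conv lt FT FP) ->
               classes (fun a b : A => rideal mulA Q' (a - b)),
    bijective phi.
Proof.
move=> [_ lt_trans lt_total _ _] _ theta_lin theta_mul theta_surj theta_ker Q' FT FP.
apply: (classes_bijective (f := theta)); last exact: theta_surj.
- by move=> a; rewrite subrr; apply: rideal_0.
- by move=> a b c ab bc; rewrite -(subrKA b); apply: rideal_add.
- move=> f g; apply: iff_trans (conv_iff_ideal_sum Q FP lt_trans lt_total f g) _.
  exact: iff_sym (rideal_theta_iff Q theta_lin theta_mul theta_surj theta_ker f g).
Qed.
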